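(* Let $h\in\mathcal H$ and $d=\operatorname{hdepth}(h)$. Then for all integers $k,d'$ with $0\le k\le d'\le d$ we have $\beta_k^{d'}(h)\ge \beta_k^d(h)\ge 0$.
   Context: $\mathcal H$ denotes the set of nonzero functions $h:\mathbb Z\to\mathbb Z_{\ge 0}$ such that $h(j)=0$ for all sufficiently negative $j$. For $h\in\mathcal H$ and integers $k\le d$, set $\beta_k^d(h)=\sum_{j\le k}(-1)^{k-j}\binom{d-j}{k-j}h(j)$. The (arithmetic) Hilbert depth of $h$ is $\operatorname{hdepth}(h)=\max\{d\in\mathbb Z:\ \beta_k^d(h)\ge 0\text{ for all integers }k\le d\}$. *)

From mathcomp Require Import all_boot all_order all_algebra.
Set Implicit Arguments. Unset Strict Implicit. Unset Printing Implicit Defensive.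
Import Order.TTheory GRing.Theory Num.Theory.
Local Open Scope ring_scope.

(* Membership in the class H: h : Z -> Z_{>=0} (codomain nat), nonzero,
   and vanishing below some integer. *)
Definition in_H (h : int -> nat) : Prop :=
  (exists j, h j <> 0%N) /\ (exists m : int, forall j, j < m -> h j = 0%N).

(* beta_k^d(h) = sum_{j <= k} (-1)^(k-j) C(d-j, k-j) h(j), computed as the
   finite sum over m <= j <= k, where m is any integer with h j = 0 for j < m
   (the value does not depend on such m).  Intended for k <= d. *)
Definition beta_term (h : int -> nat) (k d j : int) : int :=
  (-1) ^+ absz (k - j) * (binomial (absz (d - j)) (absz (k - j)))%:Z * (h j)%:Z.

Definition beta (m : int) (h : int -> nat) (k d : int) : int :=
  if m <= k then \sum_(i < absz (k - m + 1)) beta_term h k d (m + i%:Z)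
  else 0.

Definition depth_ok (m : int) (h : int -> nat) (d : int) : Prop :=
  forall k : int, k <= d -> 0 <= beta m h k d.

Definition is_hdepth (m : int) (h : int -> nat) (d : int) : Prop :=
  depth_ok m h d /\ (forall d' : int, depth_ok m h d' -> d' <= d).

From mathcomp Require Import all_boot all_order all_algebra.
From mathcomp Require Import zify ring.
Import Order.TTheory GRing.Theory Num.Theory.
Local Open Scope ring_scope.

(* Write the depth numbers with natural offsets from the
   support bound m: beta_nat h m n t is beta_k^e(h) for k = m + n and
   e = k + t.  In these coordinates the binomial coefficients obey Pascal's
   rule, which gives the recurrence
       beta_{k+1}^{e} = beta_{k+1}^{e+1} + beta_k^{e+1},
   while beta_m^e = h(m) does not depend on e.  If all the numbers
   beta_k^d (k <= d) are nonnegative, an induction on k using the recurrence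
   shows that e |-> beta_k^e is nonincreasing on [k, d]: each step down in e
   adds beta_{k-1}^{e+1}, which by induction is at least beta_{k-1}^d >= 0.
   Applied to d = hdepth(h) this is the proposition; indices k < m are
   trivial since then every beta_k vanishes. *)

(* beta_{m+n}^{m+n+t}(h), summed over the support window m <= j <= m + n. *)
Definition beta_nat (h : int -> nat) (m : int) (n t : nat) : int :=
  \sum_(i < n.+1)
    (-1) ^+ (n - i) * ('C(t + (n - i), n - i))%:Z * (h (m + i%:Z))%:Z.

Lemma betaE h m n t : beta m h (m + n%:Z) (m + n%:Z + t%:Z) = beta_nat h m n t.
Proof.
rewrite /beta ifT; last by lia.
rewrite (_ : absz (m + n%:Z - m + 1)%R = n.+1); last by lia.
apply: eq_bigr => i _; have lt_in := ltn_ord i; rewrite /beta_term.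
rewrite (_ : absz (m + n%:Z + t%:Z - (m + i%:Z))%R = (t + (n - i))%N); last by lia.
by rewrite (_ : absz (m + n%:Z - (m + i%:Z))%R = (n - i)%N); last by lia.
Qed.

Lemma beta_nat0 h m t t' : beta_nat h m 0 t = beta_nat h m 0 t'.
Proof. by rewrite /beta_nat !big_ord1 /= !subnn !addn0 !bin0. Qed.

Lemma beta_natS h m n t : beta_nat h m n.+1 t =
  \sum_(i < n.+1) (-1) ^+ (n.+1 - i) * ('C(t + (n.+1 - i), n.+1 - i))%:Z
      * (h (m + i%:Z))%:Z + (h (m + n.+1%:Z))%:Z.
Proof. by rewrite /beta_nat big_ord_recr /= subnn expr0 addn0 bin0 !mul1r. Qed.

Lemma beta_nat_pascal h m n t :
  beta_nat h m n.+1 t = beta_nat h m n.+1 t.+1 + beta_nat h m n t.+1.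
Proof.
rewrite !beta_natS /beta_nat addrAC -big_split /=; congr (_ + _).
apply: eq_bigr => i _; have le_in : (i <= n)%N by rewrite -ltnS.
rewrite subSn // addSnnS [(t.+1 + (n - i))%N]addSnnS (addnS t (n - i).+1).
rewrite binS PoszD exprS; ring.
Qed.

Section Antitone.

Variables (h : int -> nat) (m : int) (D : nat).

(* The depth condition at level d = m + D, for the indices k >= m. *)
Hypothesis beta_top_ge0 : forall n, (n <= D)%N -> 0 <= beta_nat h m n (D - n).

Lemma beta_nat_ge_top n t : (n + t <= D)%N -> beta_nat h m n (D - n) <= beta_nat h m n t.
Proof.
elim: n t => [|n IHn] t le_ntD; first by rewrite (beta_nat0 h m _ t).
(* One step down in e adds beta_k^{e+1} >= beta_k^d >= 0 (induction on k). *)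
have step : {in [pred s | s <= D - n.+1]%N, forall s, s.+1 \in [pred s | s <= D - n.+1]%N ->
    beta_nat h m n.+1 s.+1 <= beta_nat h m n.+1 s}.
  move=> s _; rewrite inE => le_sD.
  rewrite [beta_nat h m n.+1 s]beta_nat_pascal lerDl.
  by apply: le_trans (IHn _ _); [apply: beta_top_ge0 | ]; lia.
have le_tD : (t <= D - n.+1)%N by lia.
apply: (Order.NatMonotonyTheory.nonincn_inP _ step); rewrite ?inE ?leEnat //=.
move=> i j _; rewrite !inE => le_jD s /andP[_ lt_sj].
exact: leq_trans (ltnW lt_sj) le_jD.
Qed.

End Antitone.

Theorem proposition1p3 (h : int -> nat) (m : int)
  (hnz : exists j, h j <> 0%N)
  (hm : forall j : int, j < m -> h j = 0%N)
  (d : int) (hd : is_hdepth m h d) (k d' : int) :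
  0 <= k -> k <= d' -> d' <= d ->
  beta m h k d <= beta m h k d' /\ 0 <= beta m h k d.
Proof.
move=> _ le_kd' le_d'd; have [depth_d _] := hd.
have [lt_km | le_mk] := ltrP k m.
  by rewrite /beta !ifF //; apply/negbTE; rewrite -ltNge.
set n := absz (k - m); set t := absz (d' - k); set D := absz (d - m).
have top_ge0 n' : (n' <= D)%N -> 0 <= beta_nat h m n' (D - n').
  move=> le_n'D; rewrite -betaE.
  by rewrite (_ : m + n'%:Z + (D - n')%N%:Z = d) ?depth_d //; lia.
rewrite (_ : k = m + n%:Z); last by lia.
rewrite (_ : d' = m + n%:Z + t%:Z); last by lia.
rewrite (_ : d = m + n%:Z + (D - n)%N%:Z); last by lia.
rewrite !betaE; split; first by apply: beta_nat_ge_top => //; lia.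
by apply: top_ge0; lia.
Qed.
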